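(* Let $\tau\ge 1$ be an integer and $0<\kappa\le 1$. Let $\mathcal{B}=(B_1,\ldots,B_K)$ be a blockade in a graph, of width $W$. Then there is an equicardinal $(\kappa,\tau)$-support-invariant contraction $\mathcal{B}'=(B_1',\ldots,B_K')$ of $\mathcal{B}$ with width at least $\kappa^{2^K\tau^\tau}W$.
   Context: A blockade in a graph $G$ is a sequence $\mathcal{B}=(B_i:i\in I)$ of pairwise disjoint nonempty subsets of $V(G)$ (blocks), $I$ a finite set of integers; its length is $|I|$, its width is $\min_i|B_i|$; it is equicardinal if all blocks have the same cardinality. A contraction of $\mathcal{B}$ is a blockade $(B_i':i\in I)$ with $\emptyset\ne B_i'\subseteq B_i$ for all $i$. An induced subgraph $H$ of $G$ is $\mathcal{B}$-rainbow if each vertex of $H$ lies in some block and no two lie in the same block; its support is the set of $i\in I$ with $V(H)\cap B_i\neq\emptyset$. The $\mathcal{B}$-ordering of a $\mathcal{B}$-rainbow $H$ is the linear order on $V(H)$ with $u<v$ if $u\in B_i$, $v\in B_j$, $i<j$. An ordered graph is a graph with a linear order of its vertex set; a $\mathcal{B}$-rainbow $H$ is a copy of an ordered graph $J$ if $H$ with its $\mathcal{B}$-ordering is isomorphic to $J$ as ordered graphs. The trace of an ordered graph $J$ relative to $\mathcal{B}$ is the set of supports of all $\mathcal{B}$-rainbow copies of $J$. For $0<\kappa\le1$ and integer $\tau\ge1$, $\mathcal{B}$ is $(\kappa,\tau)$-support-invariant if for every contraction $\mathcal{B}'$ of $\mathcal{B}$ of width at least $\kappa$ times the width of $\mathcal{B}$,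 and every ordered tree $J$ with $|J|\le\tau$, the trace of $J$ relative to $\mathcal{B}$ equals the trace of $J$ relative to $\mathcal{B}'$. *)

From HB Require Import structures.
From mathcomp Require Import all_boot all_order all_algebra.
Set Implicit Arguments. Unset Strict Implicit. Unset Printing Implicit Defensive.
Import Order.TTheory GRing.Theory Num.Theory.

(* A graph: vertex type T : finType, adjacency e : rel T (symmetric, irreflexive). *)

Definition blockade (T : finType) (K : nat) (B : 'I_K -> {set T}) : Prop :=
  (forall i, B i != set0) /\ (forall i j, i != j -> [disjoint B i & B j]).

(* width = min_i |B_i| (the default value #|T| only matters when K = 0) *)
Definition width (T : finType) (K : nat) (B : 'I_K -> {set T}) : nat :=
  \big[minn/#|T|]_(i < K) #|B i|.

Definition contraction (T : finType) (K : nat) (B' B : 'I_K -> {set T}) : Prop :=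
  blockade B' /\ (forall i, B' i \subset B i).

Definition equicardinal (T : finType) (K : nat) (B : 'I_K -> {set T}) : Prop :=
  forall i j, #|B i| = #|B j|.

Definition width_at_least (R : realFieldType) (T : finType) (K : nat)
  (B : 'I_K -> {set T}) (x : R) : Prop :=
  (forall i, x <= (#|B i|)%:R)%R.

(* An ordered graph on n vertices: vertex set 'I_n with its natural order,
   adjacency J : rel 'I_n. *)
Definition ordered_tree (n : nat) (J : rel 'I_n) : Prop :=
  [/\ 0 < n, symmetric J, irreflexive J,
      (forall a b, connect J a b) &
      (forall c : seq 'I_n, ucycle J c -> size c < 3)].

(* A B-rainbow copy of the ordered graph J: an induced subgraph H of G with
   vertices f a (a : 'I_n), f a lying in block idx a, with idx strictly
   increasing (so distinct blocks, and the B-ordering of H matches the order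
   of 'I_n), and adjacency in G of f a, f b equal to J a b.
   Its support is the image of idx. *)
Definition rainbow_copy (T : finType) (e : rel T) (K : nat) (B : 'I_K -> {set T})
  (n : nat) (J : rel 'I_n) (f : 'I_n -> T) (idx : 'I_n -> 'I_K) : Prop :=
  [/\ (forall a, f a \in B (idx a)),
      (forall a b : 'I_n, (a < b)%N -> (idx a < idx b)%N) &
      (forall a b, e (f a) (f b) = J a b)].

Definition in_trace (T : finType) (e : rel T) (K : nat) (B : 'I_K -> {set T})
  (n : nat) (J : rel 'I_n) (S : {set 'I_K}) : Prop :=
  exists f idx, rainbow_copy e B J f idx /\ S = [set idx a | a in 'I_n].

Definition support_invariant (R : realFieldType) (T : finType) (e : rel T)
  (kappa : R) (tau : nat) (K : nat) (B : 'I_K -> {set T}) : Prop :=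
  forall B' : 'I_K -> {set T}, contraction B' B ->
    width_at_least B' (kappa * (width B)%:R)%R ->
    forall (n : nat) (J : rel 'I_n), ordered_tree J -> (n <= tau)%N ->
      forall S : {set 'I_K}, in_trace e B J S <-> in_trace e B' J S.

From HB Require Import structures.
From mathcomp Require Import all_boot all_order all_algebra.
From mathcomp Require Import boolp.
Import Order.TTheory GRing.Theory Num.Theory.
Set Implicit Arguments. Unset Strict Implicit. Unset Printing Implicit Defensive.

(* A potential argument.  An ordered tree on at most tau vertices is determined
   by a parent function, which we pad to a self-map of 'I_tau; the potential of
   a blockade is the set of pairs (S, c) such that S is the support of a rainbow
   copy of the tree coded by c.  It has at most 2^K * tau^tau elements and can
   only shrink under contraction.  Cut B down to blocks of equal size W.  While
   the current blockade is not (kappa, tau)-support-invariant, some contraction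
   of width at least kappa times the current width loses a support; cutting it
   down to equal blocks strictly decreases the potential and costs a factor
   kappa in width.  So after at most 2^K * tau^tau steps we reach an
   equicardinal support-invariant contraction of width at least
   kappa^(2^K * tau^tau) * W. *)

Section CycleOfPaths.
Variables (V : eqType) (J : rel V).
Hypothesis J_sym : symmetric J.

Lemma cycle_of_paths x y p q :
  path J x p -> path J y q -> last x p = last y q -> J y x ->
  cycle J (x :: p ++ rev (belast y q)).
Proof.
move=> Jp Jq Epq Jyx; rewrite /= rcons_cat cat_path Jp Epq rcons_path.
have -> : path J (last y q) (rev (belast y q)) = path J y q.
  by rewrite rev_path; apply: eq_path => a b; rewrite J_sym.
have -> : last (last y q) (rev (belast y q)) = y.
  by case: q {Jq Epq} => //= z q; rewrite rev_cons last_rcons.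
by rewrite Jq.
Qed.

Lemma ucycle_of_paths u v a b :
  path J u a -> path J v b -> uniq (u :: a) -> uniq (v :: b) ->
  last u a = last v b -> J u v -> u != v -> head u a != v -> head v b != u ->
  exists2 c, ucycle J c & 2 < size c.
Proof.
(* With w the first vertex of v :: b on u :: a, the cycle runs along a from u
   to w and back along b from w to v. *)
move=> Ja Jb ua ub Eab Juv neq_uv hav hbu.
have: has (mem (u :: a)) (v :: b).
  by apply/hasP; exists (last v b); rewrite ?mem_last //= -Eab; apply: mem_last.
move Evb: (v :: b) => vb hvb; case: (split_find hvb) Evb => w b1 b2 w_ua b1_ua Eb.
case/splitPl: w_ua Ja ua Eab hav b1_ua => p a2 Ep.
have [q Eq] : exists q, rcons b1 w = v :: q.
  by case: b1 Eb => [|y b1] [-> _]; [exists [::] | exists (rcons b1 w)].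
have Ew : last v q = w by rewrite -(last_cons v) -Eq last_rcons.
have Eb1 : b1 = belast v q by apply: (@rcons_injl _ w); rewrite Eq lastI Ew.
move: Eb; rewrite Eq => -[Ebq]; rewrite {}Ebq in Jb ub hbu.
rewrite cat_path => /andP[Jp _]; rewrite -cat_cons cat_uniq => /andP[up _] _ hav b1_pa.
rewrite cat_path in Jb; case/andP: Jb => Jq _.
have ub1 : uniq b1 by move: ub; rewrite -cat_cons -Eq cat_uniq rcons_uniq => /andP[/andP[]].
exists (u :: p ++ rev b1).
  rewrite /ucycle Eb1 cycle_of_paths ?Ep ?Ew 1?J_sym // -Eb1.
  rewrite -cat_cons cat_uniq up rev_uniq has_rev ub1 andbT.
  by apply: contra b1_pa; apply: sub_has => x xp; rewrite -[mem _ x]/(x \in _) mem_cat xp.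
rewrite -cat_cons size_cat size_rev [size (u :: p)]/= addSn ltnS.
case: b1 Eq {Eb1 b1_pa ub1} => [|x [|y b1]] [Exv Eq]; last exact: ltn_addl.
  case: p Ep hav {Jp up} => [|y [|z p]] Ep; rewrite ?addn0 //= in Ep *.
    by rewrite -Exv -Ep eqxx in neq_uv.
  by rewrite Ep Exv eqxx.
case: p Ep {Jp up hav} => [|y p] Ep; last by rewrite addnC.
by rewrite -Eq /= -Ep eqxx in hbu.
Qed.

End CycleOfPaths.

Section TreeParent.
Variables (V : finType) (J : rel V).
Hypotheses (J_sym : symmetric J) (J_irr : irreflexive J).

(* The parent of u is the next vertex on a simple path from u to r; an edge
   joining two vertices neither of which is the parent of the other would close
   a cycle with their paths to r. *)
Lemma acyclic_parent_fun (r : V) :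
  (forall u, connect J u r) -> (forall c, ucycle J c -> size c < 3) ->
  exists p : V -> V, forall u v, J u v = (u != v) && ((p u == v) || (p v == u)).
Proof.
move=> Jr acyclic.
have path_to_r u : exists q, [&& path J u q, last u q == r & uniq (u :: q)].
  have /connectP[q Jq ->] := Jr u.
  by case: (shortenP Jq) => q' Jq' uq' _; exists q'; rewrite Jq' eqxx uq'.
pose q u := xchoose (path_to_r u).
have qP u : [&& path J u (q u), last u (q u) == r & uniq (u :: q u)].
  exact: (xchooseP (path_to_r u)).
have J_head u : head u (q u) != u -> J u (head u (q u)).
  by case/and3P: (qP u); case: (q u) => [|y s] /=; [rewrite eqxx | case/andP].
exists (fun u => head u (q u)) => u v.
have [<-|neq_uv] := eqVneq u v; first by rewrite J_irr.
apply/idP/idP => [Juv | /orP[/eqP Epu | /eqP Epv]].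
- apply/negPn/negP => /norP[hu hv].
  case/and3P: (qP u) => Ju /eqP Eu uu; case/and3P: (qP v) => Jv /eqP Ev uv.
  have [c /acyclic] :=
    ucycle_of_paths J_sym Ju Jv uu uv (etrans Eu (esym Ev)) Juv neq_uv hu hv.
  by rewrite ltnNge => /negP.
- by rewrite -Epu J_head // Epu eq_sym.
- by rewrite J_sym -Epv J_head // Epv.
Qed.

End TreeParent.

Lemma ordered_tree_parent n (J : rel 'I_n) : ordered_tree J ->
  exists p : 'I_n -> 'I_n, forall u v, J u v = (u != v) && ((p u == v) || (p v == u)).
Proof.
case=> n_gt0 J_sym J_irr Jr.
exact: (acyclic_parent_fun J_sym J_irr (Jr^~ (Ordinal n_gt0))).
Qed.

(* The graph on 'I_n whose edges join each u to its parent [c u], for a parent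
   function [c] padded to 'I_t.+1 (only meaningful when n <= t.+1). *)
Definition code_rel t (c : {ffun 'I_t.+1 -> 'I_t.+1}) (n : nat) : rel 'I_n :=
  fun u v : 'I_n => (u != v) && ((val (c (inord u)) == v) || (val (c (inord v)) == u)).
Arguments code_rel {t} c n.

Lemma ordered_tree_code t n (J : rel 'I_n) : (n <= t.+1)%N -> ordered_tree J ->
  exists c : {ffun 'I_t.+1 -> 'I_t.+1}, J =2 code_rel c n.
Proof.
move=> le_nt /ordered_tree_parent[p Jp].
pose c := [ffun i : 'I_t.+1 =>
  inord (oapp (fun u => val (p u)) 0 (insub (val i))) : 'I_t.+1].
have val_c (u : 'I_n) : val (c (inord u)) = p u.
  have lt_t (w : 'I_n) : (w < t.+1)%N := leq_trans (ltn_ord w) le_nt.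
  by rewrite ffunE /= (inordK (lt_t u)) valK /= inordK.
by exists c => u v; rewrite Jp /code_rel !val_c.
Qed.

Section Traces.
Variables (T : finType) (e : rel T) (K : nat).
Implicit Types (B : 'I_K -> {set T}) (S : {set 'I_K}).

Lemma in_trace_sub B B' n (J : rel 'I_n) S :
  (forall i, B' i \subset B i) -> in_trace e B' J S -> in_trace e B J S.
Proof.
move=> sub_B [f [idx [[fB idx_mono fJ] ->]]]; exists f, idx; split=> //; split=> // a.
exact: subsetP (sub_B _) _ (fB a).
Qed.

Lemma eq_in_trace B n (J J' : rel 'I_n) S :
  J =2 J' -> in_trace e B J S -> in_trace e B J' S.
Proof.
move=> eqJ [f [idx [[fB idx_mono fJ] ->]]]; exists f, idx; split=> //; split=> // a b.
by rewrite fJ eqJ.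
Qed.

Lemma card_in_trace B n (J : rel 'I_n) S : in_trace e B J S -> #|S| = n.
Proof.
move=> [f [idx [[_ idx_mono _] ->]]]; rewrite card_imset ?card_ord // => a b Eab.
by apply/val_inj; case: (ltngtP a b) => // /idx_mono; rewrite Eab ltnn.
Qed.

(* The potential of B.  Pairing supports with codes makes it drop as soon as the
   trace of a single tree shrinks. *)
Definition coded_traces t B : {set {set 'I_K} * {ffun 'I_t.+1 -> 'I_t.+1}} :=
  [set x : {set 'I_K} * {ffun 'I_t.+1 -> 'I_t.+1} |
    `[< in_trace e B (code_rel x.2 #|x.1|) x.1 >]].

Lemma card_coded_traces t B : (#|coded_traces t B| <= 2 ^ K * t.+1 ^ t.+1)%N.
Proof.
apply: leq_trans (max_card _) _.
by rewrite card_prod card_ffun !card_ord -cardsT -powersetT card_powerset cardsT card_ord.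
Qed.

Lemma coded_traces_sub t B B' :
  (forall i, B' i \subset B i) -> coded_traces t B' \subset coded_traces t B.
Proof.
move=> sub_B; apply/subsetP => x; rewrite !inE => /asboolP tr_x.
by apply/asboolP; apply: in_trace_sub tr_x.
Qed.

Lemma coded_traces_proper t B B' n (J : rel 'I_n) S :
  (forall i, B' i \subset B i) -> (n <= t.+1)%N -> ordered_tree J ->
  in_trace e B J S -> ~ in_trace e B' J S -> coded_traces t B' \proper coded_traces t B.
Proof.
move=> sub_B le_nt tree_J trB ntrB'; rewrite properE coded_traces_sub //=.
have [c Jc] := ordered_tree_code le_nt tree_J.
have Sn := card_in_trace trB; subst n.
apply/subsetPn; exists (S, c); rewrite inE; first by apply/asboolP; apply: eq_in_trace trB.
by apply/asboolP => /(eq_in_trace (fun u v => esym (Jc u v))).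
Qed.

End Traces.

Section Blockades.
Variables (T : finType) (K : nat).
Implicit Types B : 'I_K -> {set T}.

Lemma width_le_card B i : (width B <= #|B i|)%N.
Proof. exact: (bigmin_le (T := nat) #|T| i). Qed.

Lemma width_le_cardT B : (width B <= #|T|)%N.
Proof. exact: (bigmin_le_id (T := nat)). Qed.

Lemma width_gt0 B (i : 'I_K) : blockade B -> (0 < width B)%N.
Proof.
move=> [B_neq0 _]; apply: (le_bigmin (T := nat)) => [|j _]; last by rewrite leEnat card_gt0.
by have /set0Pn[x _] := B_neq0 i; rewrite leEnat; apply/card_gt0P; exists x.
Qed.

Lemma ler_width (R : realFieldType) B (x : R) :
  (x <= #|T|%:R)%R -> width_at_least B x -> (x <= (width B)%:R)%R.
Proof. by move=> xT xB; rewrite /width; elim/big_ind: _ => // m k; case: leqP. Qed.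

Lemma exists_subset_card (A : {set T}) k :
  (k <= #|A|)%N -> exists S : {set T}, S \subset A /\ #|S| = k.
Proof.
move=> le_kA; exists [set x in take k (enum A)]; split.
  by apply/subsetP => x; rewrite inE => /mem_take; rewrite mem_enum.
by rewrite cardsE (card_uniqP (take_uniq _ (enum_uniq _))) size_takel // -cardE.
Qed.

Lemma contraction_trans B1 B2 B3 :
  contraction B1 B2 -> contraction B2 B3 -> contraction B1 B3.
Proof. by move=> [bB1 sub12] [_ sub23]; split=> // i; apply: subset_trans (sub23 i). Qed.

Lemma exists_contraction_card B k : blockade B -> (forall i, 0 < k <= #|B i|)%N ->
  exists B', contraction B' B /\ forall i, #|B' i| = k.
Proof.
move=> [_ disjB] k_B.
have [B' B'P] := fin_all_exists (fun i => exists_subset_card (proj2 (andP (k_B i)))).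
exists B'; split=> [|i]; last by case: (B'P i).
split=> [|i]; last by case: (B'P i).
split=> [i | i j neq_ij]; first by rewrite -card_gt0 (proj2 (B'P i)); case/andP: (k_B i).
exact: disjointW (proj1 (B'P i)) (proj1 (B'P j)) (disjB i j neq_ij).
Qed.

Lemma exists_equicardinal_contraction B : blockade B ->
  exists B', contraction B' B /\ forall i, #|B' i| = width B.
Proof.
move=> bB; apply: exists_contraction_card => // i.
by rewrite (width_gt0 i) // width_le_card.
Qed.

End Blockades.

Section SupportInvariance.
Local Open Scope ring_scope.
Variables (R : realFieldType) (T : finType) (e : rel T) (kappa : R).
Hypotheses (kappa_ge0 : 0 <= kappa) (kappa_le1 : kappa <= 1).
Variables (t K : nat).
Implicit Types B : 'I_K -> {set T}.

Lemma scaled_width_le_cardT B : kappa * (width B)%:R <= #|T|%:R.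
Proof. by rewrite (le_trans (ler_piMl _ _)) ?ler_nat ?width_le_cardT. Qed.

Lemma support_invariant_step B : blockade B -> ~ support_invariant e kappa t.+1 B ->
  exists B3, [/\ contraction B3 B, equicardinal B3,
    kappa * (width B)%:R <= (width B3)%:R & coded_traces e t B3 \proper coded_traces e t B].
Proof.
move=> bB nSI.
have [B'' [cB wB [n [J [S [tree_J le_nt trB ntrB]]]]]] : exists B'',
  [/\ contraction B'' B, width_at_least B'' (kappa * (width B)%:R) &
    exists n (J : rel 'I_n) S,
      [/\ ordered_tree J, (n <= t.+1)%N, in_trace e B J S & ~ in_trace e B'' J S]].
  apply: contra_notP nSI => no_loss B'' cB wB n J tree_J le_nt S.
  split=> [trB|]; last exact: in_trace_sub (proj2 cB).
  by apply: contrapT => ntrB; apply: no_loss; exists B''; split=> //; exists n, J, S.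
have [B3 [cB3 B3_card]] := exists_equicardinal_contraction (proj1 cB).
have sub3 i : B3 i \subset B i := subset_trans (proj2 cB3 i) (proj2 cB i).
exists B3; split.
- exact: contraction_trans cB3 cB.
- by move=> i j; rewrite !B3_card.
- apply: ler_width (scaled_width_le_cardT B) _ => i; rewrite B3_card.
  exact: ler_width (scaled_width_le_cardT B) wB.
- apply: coded_traces_proper sub3 le_nt tree_J trB _.
  by apply: contra_not ntrB; apply: in_trace_sub (proj2 cB3).
Qed.

Lemma support_invariant_contraction B : blockade B -> equicardinal B ->
  exists B', [/\ contraction B' B, equicardinal B', support_invariant e kappa t.+1 B' &
    width_at_least B' (kappa ^+ #|coded_traces e t B| * (width B)%:R)].
Proof.
have [m] := ubnP #|coded_traces e t B|; elim: m B => // m IHm B lt_m bB eqB.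
have [SI | nSI] := pselect (support_invariant e kappa t.+1 B).
  exists B; split=> //.
  by move=> i; rewrite (le_trans (ler_piMl _ _)) ?exprn_ile1 ?ler_nat ?width_le_card.
have [B3 [cB3 eqB3 W3 ltB3]] := support_invariant_step bB nSI.
have [B' [cB' eqB' SI' wB']] := IHm B3 (leq_trans (proper_card ltB3) lt_m) (proj1 cB3) eqB3.
exists B'; split=> //; first exact: contraction_trans cB' cB3.
move=> i; apply: le_trans (wB' i).
apply: le_trans (_ : kappa ^+ #|coded_traces e t B3|.+1 * (width B)%:R <= _).
  by rewrite ler_wpM2r ?ler0n // ler_wiXn2l // proper_card.
by rewrite exprSr -mulrA ler_wpM2l ?exprn_ge0.
Qed.

End SupportInvariance.

Local Open Scope ring_scope.

Theorem theorem4p1 (R : realFieldType) (T : finType) (e : rel T)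
  (e_sym : symmetric e) (e_irr : irreflexive e)
  (tau : nat) (kappa : R) (htau : (1 <= tau)%N)
  (hk0 : 0 < kappa) (hk1 : kappa <= 1)
  (K : nat) (B : 'I_K -> {set T}) (hB : blockade B) :
  exists B' : 'I_K -> {set T},
    [/\ contraction B' B, equicardinal B',
        support_invariant e kappa tau B' &
        width_at_least B' (kappa ^+ (2 ^ K * tau ^ tau) * (width B)%:R)].
Proof.
case: tau htau => // t _.
have [B0 [cB0 B0_card]] := exists_equicardinal_contraction hB.
have eqB0 : equicardinal B0 by move=> i j; rewrite !B0_card.
have [B' [cB' eqB' SI' wB']] :=
  support_invariant_contraction e (ltW hk0) hk1 t (proj1 cB0) eqB0.
exists B'; split=> //; first exact: contraction_trans cB' cB0.
have W0 : (width B)%:R <= (width B0)%:R :> R.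
  by apply: ler_width => [|i]; rewrite ?B0_card ler_nat ?width_le_cardT.
move=> i; apply: le_trans (wB' i).
apply: le_trans (_ : kappa ^+ #|coded_traces e t B0| * (width B)%:R <= _).
  by rewrite ler_wpM2r ?ler0n // ler_wiXn2l ?(ltW hk0) // card_coded_traces.
by rewrite ler_wpM2l ?exprn_ge0 ?(ltW hk0).
Qed.
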